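(* Let $\mathcal{CS}$ be an axiomatically appropriate constant specification and $y$ an individual variable. For every finite set $X$ of individual variables with $y\notin X$, every formula $\varphi(y)$ and every justification term $t$, there are justification terms $f(t)$ and $s(t)$ such that (1) $\vdash_{\mathcal{CS}} t{:}_X\forall y\varphi(y)\to\forall y\, f(t){:}_{Xy}\varphi(y)$, and (2) $\vdash_{\mathcal{CS}} \exists y\, t{:}_{Xy}\varphi(y)\to s(t){:}_X\exists y\varphi(y)$.
   Context: Syntax of FOLPb: terms $t::=p_i\mid c\mid (t\cdot t)\mid (t+t)\mid !t\mid\mathsf b(t)\mid\mathsf{gen}_x(t)$; formulas $Px_1\dots x_n\mid\bot\mid\varphi\to\varphi\mid\forall x\varphi\mid t{:}_X\varphi$ with $X$ a finite set of individual variables; the free variables of $t{:}_X\psi$ are exactly those in $X$. $Xy$ denotes $X\cup\{y\}$ with $y\notin X$. Axioms of $\mathsf{FOLPb}_0$: A1 classical first-order axioms; A2 $t{:}_{Xy}\varphi\to t{:}_X\varphi$ if $y$ not free in $\varphi$; A3 $t{:}_X\varphi\to t{:}_{Xy}\varphi$; B1 $t{:}_X\varphi\to\varphi$; B2 $t{:}_X(\varphi\to\psi)\to(s{:}_X\varphi\to[t\cdot s]{:}_X\psi)$; B3 $t{:}_X\varphi\to[t+s]{:}_X\varphi$, $s{:}_X\varphi\to[t+s]{:}_X\varphi$; B4 $t{:}_X\varphi\to!t{:}_Xt{:}_X\varphi$; B5 $t{:}_X\varphi\to\mathsf{gen}_x(t){:}_X\forall x\varphi$ if $x\notin X$; Bb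 $\forall y\,t{:}_{Xy}\varphi(y)\to\mathsf b(t){:}_X\forall y\varphi(y)$; rules modus ponens and generalization. A constant specification $\mathcal{CS}$ is a set of formulas $c{:}\psi$ ($\psi$ an axiom, $c$ a constant); it is axiomatically appropriate if for every axiom $\psi$ some $c{:}\psi\in\mathcal{CS}$. $\vdash_{\mathcal{CS}}$ is provability in $\mathsf{FOLPb}_0$ with $\mathcal{CS}$ added as axioms. *)

From mathcomp Require Import all_boot.
Set Implicit Arguments.
Unset Strict Implicit.
Unset Printing Implicit Defensive.

(* Individual variables and predicate symbols are natural numbers. *)

Inductive jterm : Type :=
  | JVar   : nat -> jterm
  | JConst : nat -> jterm
  | JApp   : jterm -> jterm -> jterm
  | JSum   : jterm -> jterm -> jterm
  | JBang  : jterm -> jterm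
  | JB     : jterm -> jterm
  | JGen   : nat -> jterm -> jterm.

(* Finite sets of individual variables, represented canonically as strictly
   increasing lists (so that set equality is Leibniz equality). *)
Record vset := VSet { vs :> seq nat; vs_sorted : sorted ltn vs }.

Definition vnorm (s : seq nat) : seq nat := sort leq (undup s).

Lemma vnorm_sorted (s : seq nat) : sorted ltn (vnorm s).
Proof.
rewrite ltn_sorted_uniq_leq sort_uniq undup_uniq /=.
apply: sort_sorted; exact: leq_total.
Qed.

Definition mkvset (s : seq nat) : vset := VSet (vnorm_sorted s).
Definition vempty : vset := mkvset [::].
(* X y  :=  X \cup {y} *)
Definition vadd (X : vset) (y : nat) : vset := mkvset (y :: vs X).
Definition vdel (X : vset) (x : nat) : vset := mkvset (filter (predC1 x) (vs X)).

Inductive formula : Type :=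
  | Atom : nat -> seq nat -> formula
  | Bot  : formula
  | Imp  : formula -> formula -> formula
  | All  : nat -> formula -> formula
  | Just : jterm -> vset -> formula -> formula.

Definition Neg (A : formula) : formula := Imp A Bot.
Definition Ex (x : nat) (A : formula) : formula := Neg (All x (Neg A)).

Fixpoint free (x : nat) (A : formula) : bool :=
  match A with
  | Atom _ xs => x \in xs
  | Bot => false
  | Imp A B => free x A || free x B
  | All w A => (w != x) && free x A
  | Just _ X _ => x \in vs X
  end.

Fixpoint subst (x z : nat) (A : formula) : formula :=
  match A with
  | Atom P xs => Atom P (map (fun v => if v == x then z else v) xs)
  | Bot => Bot
  | Imp A B => Imp (subst x z A) (subst x z B)
  | All w A => if w == x then All w A else All w (subst x z A)
  | Just t X A =>
      if x \in vs X then Just t (vadd (vdel X x) z) (subst x z A)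
      else Just t X A
  end.

Fixpoint free_for (x z : nat) (A : formula) : bool :=
  match A with
  | Atom _ _ => true
  | Bot => true
  | Imp A B => free_for x z A && free_for x z B
  | All w A => ~~ free x (All w A) || ((w != z) && free_for x z A)
  | Just _ X A => (x \notin vs X) || free_for x z A
  end.

Inductive IsAxiom : formula -> Prop :=
  | AxK  A B   : IsAxiom (Imp A (Imp B A))
  | AxS  A B C : IsAxiom (Imp (Imp A (Imp B C)) (Imp (Imp A B) (Imp A C)))
  | AxDN A     : IsAxiom (Imp (Neg (Neg A)) A)
  | AxInst x z A : free_for x z A -> IsAxiom (Imp (All x A) (subst x z A))
  | AxVac x A : ~~ free x A -> IsAxiom (Imp A (All x A))
  | AxAllImp x A B : IsAxiom (Imp (All x (Imp A B)) (Imp (All x A) (All x B)))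
  | AxA2 t X y A : y \notin vs X -> ~~ free y A ->
      IsAxiom (Imp (Just t (vadd X y) A) (Just t X A))
  | AxA3 t X y A : y \notin vs X ->
      IsAxiom (Imp (Just t X A) (Just t (vadd X y) A))
  | AxB1 t X A : IsAxiom (Imp (Just t X A) A)
  | AxB2 t s X A B :
      IsAxiom (Imp (Just t X (Imp A B)) (Imp (Just s X A) (Just (JApp t s) X B)))
  | AxB3l t s X A : IsAxiom (Imp (Just t X A) (Just (JSum t s) X A))
  | AxB3r t s X A : IsAxiom (Imp (Just s X A) (Just (JSum t s) X A))
  | AxB4 t X A : IsAxiom (Imp (Just t X A) (Just (JBang t) X (Just t X A)))
  | AxB5 t X x A : x \notin vs X ->
      IsAxiom (Imp (Just t X A) (Just (JGen x t) X (All x A)))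
  | AxBb t X y A : y \notin vs X ->
      IsAxiom (Imp (All y (Just t (vadd X y) A)) (Just (JB t) X (All y A))).

(* A constant specification: a set of pairs (c, psi), read as formulas c:psi
   (with empty variable set), where psi is an axiom. *)
Definition constspec := nat -> formula -> Prop.

Definition is_constspec (CS : constspec) : Prop :=
  forall c A, CS c A -> IsAxiom A.

Definition axiomatically_appropriate (CS : constspec) : Prop :=
  forall A, IsAxiom A -> exists c, CS c A.

Inductive provable (CS : constspec) : formula -> Prop :=
  | PAx A : IsAxiom A -> provable CS A
  | PCS c A : CS c A -> provable CS (Just (JConst c) vempty A)
  | PMP A B : provable CS (Imp A B) -> provable CS A -> provable CS B
  | PGen x A : provable CS A -> provable CS (All x A).

From mathcomp Require Import all_boot.
Set Implicit Arguments.

(* Both parts are instances of one transfer principle.  As CS is axiomatically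
   appropriate, every theorem A -> B is internalised by some term u (the
   lifting lemma, via B2, B4 and B5), and then B2 turns t :_X A into
   [u.t] :_X B.  For (1) apply it to the instance axiom forall y phi -> phi,
   widen X to Xy by A3 and generalise over y, which is not free in
   t :_X forall y phi because y is not in X.  For (2) apply it to
   phi -> exists y phi at Xy, drop y by A2, as y is not free in exists y phi,
   and eliminate the existential. *)

Lemma vs_inj (X1 X2 : vset) : vs X1 = vs X2 -> X1 = X2.
Proof.
case: X1 X2 => s1 p1 [s2 p2] /= e; subst s2; congr VSet; exact: bool_irrelevance.
Qed.

Lemma mem_vnorm s x : (x \in vnorm s) = (x \in s).
Proof. by rewrite /vnorm mem_sort mem_undup. Qed.

Lemma mkvset_eq s1 s2 : s1 =i s2 -> mkvset s1 = mkvset s2.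
Proof.
move=> e; apply: vs_inj; apply: (irr_sorted_eq ltn_trans ltnn);
  [exact: vnorm_sorted | exact: vnorm_sorted | by move=> x; rewrite !mem_vnorm e].
Qed.

Lemma mkvsetK (X : vset) : mkvset X = X.
Proof.
apply: vs_inj; apply: (irr_sorted_eq ltn_trans ltnn);
  [exact: vnorm_sorted | exact: vs_sorted | by move=> x; rewrite mem_vnorm].
Qed.

Lemma subst_id x A : subst x x A = A.
Proof.
elim: A => //=.
- move=> P xs; congr Atom; elim: xs => //= a l ->; by case: eqP => // ->.
- by move=> A -> B ->.
- by move=> w A ->; case: eqP.
- move=> t X A ->; case: ifP => // xX; congr Just.
  rewrite -{2}(mkvsetK X); apply: mkvset_eq => z.
  by rewrite in_cons mem_vnorm mem_filter /=; case: (eqVneq z x) => [->|].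
Qed.

Lemma free_for_id x A : free_for x x A.
Proof.
elim: A => //=.
- by move=> A -> B ->.
- by move=> w A ->; rewrite andbT; case: (w != x); rewrite ?orbT.
- by move=> t X A ->; rewrite orbT.
Qed.

Section Derivations.

Variable CS : constspec.

Lemma imp_trans A B C :
  provable CS (Imp A B) -> provable CS (Imp B C) -> provable CS (Imp A C).
Proof.
move=> hAB hBC.
have hA_BC : provable CS (Imp A (Imp B C)) by exact: PMP (PAx CS (AxK _ _)) hBC.
exact: PMP (PMP (PAx CS (AxS _ _ _)) hA_BC) hAB.
Qed.

Lemma imp_swap A B C :
  provable CS (Imp A (Imp B C)) -> provable CS (Imp B (Imp A C)).
Proof.
move=> h; exact: imp_trans (PAx CS (AxK B A)) (PMP (PAx CS (AxS A B C)) h).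
Qed.

Lemma imp_contra A B C :
  provable CS (Imp A B) -> provable CS (Imp (Imp B C) (Imp A C)).
Proof.
move=> hAB.
have hS : provable CS (Imp (Imp B C) (Imp (Imp A B) (Imp A C))).
  exact: imp_trans (PAx CS (AxK _ A)) (PAx CS (AxS A B C)).
exact: PMP (PMP (PAx CS (AxS _ _ _)) hS) (PMP (PAx CS (AxK _ _)) hAB).
Qed.

Lemma all_inst y A : provable CS (Imp (All y A) A).
Proof. by have := PAx CS (AxInst (free_for_id y A)); rewrite subst_id. Qed.

Lemma all_mono y A B :
  provable CS (Imp A B) -> provable CS (Imp (All y A) (All y B)).
Proof. by move=> hAB; apply: PMP (PAx CS (AxAllImp _ _ _)) (PGen y hAB). Qed.

Lemma all_intro y A B :
  ~~ free y A -> provable CS (Imp A B) -> provable CS (Imp A (All y B)).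
Proof. by move=> yA hAB; apply: imp_trans (PAx CS (AxVac yA)) (all_mono y hAB). Qed.

Lemma ex_intro y A : provable CS (Imp A (Ex y A)).
Proof. exact: imp_swap (all_inst y (Neg A)). Qed.

Lemma ex_elim y A B :
  ~~ free y B -> provable CS (Imp A B) -> provable CS (Imp (Ex y A) B).
Proof.
move=> yB hAB.
have yNB : ~~ free y (Neg B) by rewrite /= orbF.
have hNB : provable CS (Imp (Neg B) (All y (Neg A))).
  exact: all_intro yNB (imp_contra Bot hAB).
exact: imp_trans (imp_contra Bot hNB) (PAx CS (AxDN _)).
Qed.

Lemma just_widen u A :
  provable CS (Just u vempty A) -> forall X : vset, provable CS (Just u X A).
Proof.
move=> h X; rewrite -(mkvsetK X); elim: (vs X) => [|a l IH] //.
have [al | al] := boolP (a \in l).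
  rewrite (@mkvset_eq (a :: l) l) // => x.
  by rewrite in_cons; case: eqP => // ->.
have -> : mkvset (a :: l) = vadd (mkvset l) a.
  by apply: mkvset_eq => x; rewrite /= !in_cons mem_vnorm.
by apply: PMP IH; apply/PAx/AxA3; rewrite /= mem_vnorm.
Qed.

Lemma lifting :
  axiomatically_appropriate CS ->
  forall A, provable CS A -> exists u, provable CS (Just u vempty A).
Proof.
move=> happ A; elim=> {A}.
- move=> A /happ [c hc]; exists (JConst c); exact: PCS.
- move=> c A hc; exists (JBang (JConst c)).
  exact: PMP (PAx CS (AxB4 _ _ _)) (PCS hc).
- move=> A B _ [u hu] _ [v hv]; exists (JApp u v).
  exact: PMP (PMP (PAx CS (AxB2 _ _ _ _ _)) hu) hv.
- move=> x A _ [u hu]; exists (JGen x u).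
  by apply: PMP hu; apply/PAx/AxB5.
Qed.

Lemma just_transfer A B :
  axiomatically_appropriate CS -> provable CS (Imp A B) ->
  forall (X : vset) (t : jterm),
  exists s, provable CS (Imp (Just t X A) (Just s X B)).
Proof.
move=> happ /(lifting happ) [u hu] X t; exists (JApp u t).
exact: PMP (PAx CS (AxB2 _ _ _ _ _)) (just_widen hu X).
Qed.

End Derivations.

Theorem mainTheorem5 (CS : constspec) (hCS : is_constspec CS)
  (happ : axiomatically_appropriate CS) (y : nat) :
  forall (X : vset), y \notin vs X ->
  forall (phi : formula) (t : jterm),
  exists f s : jterm,
    provable CS (Imp (Just t X (All y phi)) (All y (Just f (vadd X y) phi))) /\
    provable CS (Imp (Ex y (Just t (vadd X y) phi)) (Just s X (Ex y phi))).
Proof.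
move=> X yX phi t.
have [f hf] := just_transfer happ (all_inst CS y phi) X t.
have [s hs] := just_transfer happ (ex_intro CS y phi) (vadd X y) t.
exists f, s; split.
- apply: all_intro; first exact: yX.
  exact: imp_trans hf (PAx CS (AxA3 f phi yX)).
- apply: ex_elim => //.
  have y_Ex : ~~ free y (Ex y phi) by rewrite /= eqxx.
  exact: imp_trans hs (PAx CS (AxA2 s yX y_Ex)).
Qed.
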